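(* Let $p$ be a prime and $k\geq 4$, and assume hypothesis $\mathcal{H}(k)$: for every integer $3\leq k'<k$, every $0<\varepsilon<1$, every $n\geq 1$ and all $Z_1,\dots,Z_{k'}\subseteq\mathbb{F}_p^n$ such that $Z_1\times\dots\times Z_{k'}$ contains at least $\varepsilon N$ pairwise disjoint $k'$-cycles, the number of $k'$-cycles in $Z_1\times\dots\times Z_{k'}$ is at least $\varepsilon^{C_{p,k'}}N^{k'-1}$. Work in the standing setting below (sets $X_1,\dots,X_k$, numbers $\delta'>0$, $\theta\geq1$, $\alpha$, bad tuples). Let $M$ be a collection of $k$-cycles in $X_1\times\dots\times X_k$ with $|M|\geq r\delta' N^{k-1}$ for some real $0<r<1$. Let $I_1,I_2\subseteq[k]$ be disjoint with $I_1\cup I_2=[k]$, $2\leq|I_1|\leq k-2$ and $2\leq |I_2|\leq k-2$. Assume: (i) for every $I_1$-tuple $(x_i)_{i\in I_1}\in\prod_{i\in I_1}X_i$, there are at most $2\alpha^{k-|I_1|-1}N^{k-|I_1|-1}$ $k$-cycles $(x_1,\dots,x_k)\in M$ extending it (i.e. whose coordinates indexed by $I_1$ are the given ones); (ii) for every $(x_1,\dots,x_k)\in M$, the $I_2$-tuple $(x_i)_{i\in I_2}$ is not bad. Then $$\delta'\theta^{C_{p,k}}\geq\left(\frac{r}{4k}\right)^{C_{p,k}}.$$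
   Context: Let $p$ be a fixed prime, $n\geq1$, $N=p^n$, $[m]=\{1,\dots,m\}$. For sets $X_1,\dots,X_k\subseteq\mathbb{F}_p^n$, a $k$-cycle is a tuple $(x_1,\dots,x_k)\in X_1\times\dots\times X_k$ with $x_1+\dots+x_k=0$; two $k$-cycles are disjoint if they differ in every coordinate. Define $0<c_{p,3}<1$ by $\inf_{0<t<1}\frac{t^0+\dots+t^{p-1}}{t^{(p-1)/3}}=p^{1-c_{p,3}}$, $C_{p,3}=1+\frac{1}{c_{p,3}}$, $C_{p,k}=(k-2)(C_{p,3}-1)+1$. Standing setting: $k\geq4$, $X_1,\dots,X_k\subseteq\mathbb{F}_p^n$, the number of $k$-cycles in $X_1\times\dots\times X_k$ equals $\delta'N^{k-1}$ with $\delta'>0$, and $\theta\geq 1$ is such that for each $i\in[k]$ every point of $X_i$ occurs as $x_i$ in at most $\theta\delta'N^{k-2}$ $k$-cycles. Put $\alpha=(\theta\delta')^{1/(k-2)}$. For $I\subseteq[k]$ with $1\leq|I|\leq k-2$, an $I$-tuple is an element $(x_i)_{i\in I}\in\prod_{i\in I}X_i$; it is called bad if there are at least $2\alpha^{k-|I|-1}N^{k-|I|-1}$ $k$-cycles $(x_1,\dots,x_k)\in X_1\times\dots\times X_k$ whose coordinates indexed by $I$ coincide with the given tuple. *)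

From HB Require Import structures.
From mathcomp Require Import all_boot all_algebra.
From Stdlib Require Import Reals.

Set Implicit Arguments.
Unset Strict Implicit.
Unset Printing Implicit Defensive.

(* A point of F_p^n; a k-tuple of points is a finite function 'I_k -> F_p^n
   (indices are 0-based: 'I_k stands for [k] = {1,...,k}). *)
Definition tup (p n k : nat) := {ffun 'I_k -> 'rV['F_p]_n}.

Section RingSc.
Local Open Scope ring_scope.
Definition kcycles (p n k : nat) (X : 'I_k -> {set 'rV['F_p]_n}) : {set tup p n k} :=
  [set x : tup p n k | [forall i, x i \in X i] && (\sum_(i < k) x i == 0)].
End RingSc.

Definition disjoint_tup (p n k : nat) (x y : tup p n k) : Prop :=
  forall i : 'I_k, x i <> y i.

Definition agree_on (p n k : nat) (I : {set 'I_k}) (x y : tup p n k) : bool :=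
  [forall i in I, x i == y i].

(* An I-tuple is represented by any y with y i \in X i for i \in I
   (the coordinates of y outside I are irrelevant). *)
Definition is_Ituple (p n k : nat) (X : 'I_k -> {set 'rV['F_p]_n})
  (I : {set 'I_k}) (y : tup p n k) : bool :=
  [forall i in I, y i \in X i].

Definition ext_count (p n k : nat) (S : {set tup p n k}) (I : {set 'I_k})
  (y : tup p n k) : nat :=
  #|[set x in S | agree_on I x y]|.

Local Open Scope R_scope.

Definition NN (p n : nat) : R := INR p ^ n.

Definition cfun (p : nat) (t : R) : R :=
  sum_f_R0 (fun j => t ^ j) (p - 1) / Rpower t ((INR p - 1) / 3).

Definition is_inf (A : R -> Prop) (m : R) : Prop :=
  (forall y, A y -> m <= y) /\ (forall b, (forall y, A y -> b <= y) -> b <= m).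

Definition is_cp3 (p : nat) (c : R) : Prop :=
  is_inf (fun y => exists t, 0 < t < 1 /\ y = cfun p t) (Rpower (INR p) (1 - c)).

Definition C3 (c : R) : R := 1 + / c.
Definition Ck (c : R) (k : nat) : R := INR (k - 2) * (C3 c - 1) + 1.

Definition hypH (p : nat) (c : R) (k : nat) : Prop :=
  forall (k' : nat), (3 <= k')%nat -> (k' < k)%nat ->
  forall eps : R, 0 < eps < 1 ->
  forall n : nat, (1 <= n)%nat ->
  forall Z : 'I_k' -> {set 'rV['F_p]_n},
    (exists S : {set tup p n k'},
        S \subset kcycles Z /\
        (forall x y, x \in S -> y \in S -> x <> y -> disjoint_tup x y) /\
        INR #|S| >= eps * NN p n) ->
    INR #|kcycles Z| >= Rpower eps (Ck c k') * NN p n ^ (k' - 1).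

Definition alpha (theta delta' : R) (k : nat) : R :=
  Rpower (theta * delta') (/ INR (k - 2)).

Definition bad (p n k : nat) (X : 'I_k -> {set 'rV['F_p]_n}) (theta delta' : R)
  (I : {set 'I_k}) (y : tup p n k) : Prop :=
  INR (ext_count (kcycles X) I y) >=
    2 * alpha theta delta' k ^ (k - #|I| - 1) * NN p n ^ (k - #|I| - 1).

From HB Require Import structures.
From mathcomp Require Import all_boot all_algebra.
From Stdlib Require Import Reals Lra Lia.
From mathcomp Require Import zify.

(* Call two cycles of M clashing when they share a coordinate in I1 or have the same sum
   over I1.  By the degree bound, (i), and since no cycle of M has a bad I2-tuple, a cycle
   of M clashes with at most 2k theta delta' N^(k-2) others, so a maximal family S of
   pairwise non-clashing cycles of M has density eps = |S|/N >= r/(2k theta).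
   Collapsing the coordinates of each s in S outside I1 into the single coordinate
   -sum_{i in I1} s_i turns S into eps N pairwise disjoint (|I1|+1)-cycles, so H(k) yields
   at least eps^C N^|I1| collapsed cycles, C = C_{p,|I1|+1}.  Each collapsed cycle lifts
   back to a k-cycle agreeing on I2 with some s in S, and s is not bad, so there are at
   most eps N * 2 alpha^(|I1|-1) N^(|I1|-1) of them.  Comparing the two counts, and using
   C_{p,3} >= 2, gives the inequality. *)

Set Implicit Arguments.
Unset Strict Implicit.
Unset Printing Implicit Defensive.

Section Cycles.
Local Open Scope ring_scope.
Import GRing.Theory.

Lemma kcyclesP {p n k : nat} {X : 'I_k -> {set 'rV['F_p]_n}} {x : tup p n k} :
  reflect ((forall i, x i \in X i) /\ \sum_i x i = 0) (x \in kcycles X).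
Proof.
rewrite inE; apply: (iffP andP) => [[/forallP ? /eqP ?]|[? ?]]; split=> //.
  exact/forallP.
exact/eqP.
Qed.

Variables (p n k : nat).
Implicit Types (X : 'I_k -> {set 'rV['F_p]_n}) (I J : {set 'I_k}) (x s : tup p n k).
Implicit Types (W : {set 'rV['F_p]_n}).

Definition sum_on I x : 'rV['F_p]_n := \sum_(i in I) x i.

Definition clash I s x : bool :=
  [exists i in I, x i == s i] || (sum_on I x == sum_on I s).

Lemma clash_refl I : reflexive (clash I).
Proof. by move=> s; rewrite /clash eqxx orbT. Qed.

Lemma clash_sym I : symmetric (clash I).
Proof.
move=> s x; rewrite /clash eq_sym; congr (_ || _).
by apply: eq_existsb => i; rewrite eq_sym.
Qed.

Definition collapse I x : tup p n #|I|.+1 :=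
  [ffun j => if unlift ord_max j is Some j' then x (enum_val j') else - sum_on I x].

Definition collapse_sets X I (W : {set 'rV['F_p]_n}) (j : 'I_#|I|.+1) :
    {set 'rV['F_p]_n} :=
  if unlift ord_max j is Some j' then X (enum_val j') else W.
Arguments collapse_sets : clear implicits.

Definition neg_sums I (S : {set tup p n k}) : {set 'rV['F_p]_n} :=
  [set - sum_on I s | s in S].

Lemma card_neg_sums I (S : {set tup p n k}) : (#|neg_sums I S| <= #|S|)%nat.
Proof. exact: leq_imset_card. Qed.

Definition uncollapse {I i0} (Hi0 : i0 \in I) (z : tup p n #|I|.+1) : tup p n k :=
  [ffun i => z (lift ord_max (enum_rank_in Hi0 i))].

Definition splice I x s : tup p n k := [ffun i => if i \in I then x i else s i].

Lemma sum_ord_max (a : nat) (F : 'I_a.+1 -> 'rV['F_p]_n) :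
  \sum_j F j = F ord_max + \sum_(j < a) F (lift ord_max j).
Proof. by rewrite (bigD1_ord ord_max). Qed.

Lemma sum_on_enum I x : sum_on I x = \sum_(j < #|I|) x (enum_val j).
Proof. by rewrite /sum_on (big_enum_val (fun i => x i)). Qed.

Lemma collapse_max I x : collapse I x ord_max = - sum_on I x.
Proof. by rewrite ffunE unlift_none. Qed.

Lemma collapse_sets_max X I W : collapse_sets X I W ord_max = W.
Proof. by rewrite /collapse_sets unlift_none. Qed.

Lemma collapse_kcycles X I W s :
  s \in kcycles X -> - sum_on I s \in W -> collapse I s \in kcycles (collapse_sets X I W).
Proof.
move=> /kcyclesP [sX _] sW; apply/kcyclesP; split.
  by move=> j; rewrite ffunE /collapse_sets; case: unliftP.
rewrite sum_ord_max collapse_max.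
under eq_bigr do rewrite ffunE liftK.
by rewrite -sum_on_enum addNr.
Qed.

Lemma collapse_disjoint I s x : ~~ clash I s x -> disjoint_tup (collapse I s) (collapse I x).
Proof.
rewrite negb_or negb_exists_in => /andP [/forall_inP neI neS] j.
rewrite !ffunE; case: unliftP => [j' _|_].
  by move=> e; have := neI _ (enum_valP j'); rewrite e eqxx.
by move/oppr_inj => e; move: neS; rewrite e eqxx.
Qed.

Lemma uncollapse_sets X I i0 (Hi0 : i0 \in I) W z i :
  z \in kcycles (collapse_sets X I W) -> i \in I -> uncollapse Hi0 z i \in X i.
Proof.
move=> /kcyclesP [zX _] iI; move: (zX (lift ord_max (enum_rank_in Hi0 i))).
by rewrite ffunE /collapse_sets liftK enum_rankK_in.
Qed.

Lemma sum_on_uncollapse X I i0 (Hi0 : i0 \in I) W z :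
  z \in kcycles (collapse_sets X I W) -> sum_on I (uncollapse Hi0 z) = - z ord_max.
Proof.
move=> /kcyclesP [_]; rewrite sum_ord_max => /(canRL (addKr _)); rewrite addr0 => <-.
rewrite sum_on_enum; apply: eq_bigr => j _.
by rewrite ffunE enum_valK_in.
Qed.

Lemma sum_splice I x s : \sum_i splice I x s i = sum_on I x + \sum_(i | i \notin I) s i.
Proof.
rewrite (bigID (mem I)) /=; congr (_ + _); apply: eq_bigr => i iI.
  by rewrite ffunE iI.
by rewrite ffunE (negbTE iI).
Qed.

Lemma splice_kcycles X I J x s :
  [disjoint I & J] -> s \in kcycles X -> {in I, forall i, x i \in X i} ->
  sum_on I x = sum_on I s -> splice I x s \in [set y in kcycles X | agree_on J y s].
Proof.
move=> dIJ /kcyclesP [sX s0] xX eIs; rewrite inE; apply/andP; split.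
  apply/kcyclesP; split.
    by move=> i; rewrite ffunE; case: ifPn => [/xX|].
  by rewrite sum_splice eIs; move: s0; rewrite (bigID (mem I)).
by apply/forall_inP => i iJ; rewrite ffunE (disjointFl dIJ iJ).
Qed.

Lemma agree_splice I x s : agree_on I x (splice I x s).
Proof. by apply/forall_inP => i iI; rewrite ffunE iI. Qed.

Lemma splice_uncollapse_inj I i0 (Hi0 : i0 \in I) s (z z' : tup p n #|I|.+1) :
  z ord_max = z' ord_max ->
  splice I (uncollapse Hi0 z) s = splice I (uncollapse Hi0 z') s -> z = z'.
Proof.
move=> ez e; apply/ffunP => j; case: (unliftP ord_max j) => [j' ->|->] //.
have := congr1 (fun y : tup p n k => y (enum_val j')) e.
by rewrite !ffunE enum_valP enum_valK_in.
Qed.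

Lemma kcycles_zero : kcycles (fun _ : 'I_k => [set 0 : 'rV['F_p]_n]) = [set [ffun=> 0]].
Proof.
apply/setP => x; rewrite !inE; apply/andP/eqP => [[/forallP x0 _]|->].
  by apply/ffunP => i; rewrite ffunE; move: (x0 i); rewrite inE => /eqP.
split; first by apply/forallP => i; rewrite ffunE inE.
by rewrite big1 // => i _; rewrite ffunE.
Qed.

End Cycles.

Arguments collapse_sets {p n k} X I W j.

Lemma ex_maximal_independent (T : finType) (e : rel T) (A : {set T}) (m : nat) :
  reflexive e -> symmetric e ->
  exists S : {set T}, [/\ S \subset A, {in S &, forall s x, s != x -> ~~ e s x},
    (#|S| <= m)%nat & #|S| = m \/ {in A, forall x, exists2 s, s \in S & e s x}].
Proof.
move=> e_refl e_sym.
pose indep (S : {set T}) :=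
  [&& S \subset A, [forall s in S, forall x in S, (s != x) ==> ~~ e s x] & #|S| <= m]%nat.
have indep0 : indep set0.
  by apply/and3P; split; [exact: sub0set | apply/forall_inP => ?; rewrite inE | rewrite cards0].
have [S maxS] := ex_maxset (ex_intro _ set0 indep0).
have /and3P [SA /forall_inP Sind Sm] := maxsetp maxS.
have {}Sind : {in S &, forall s x, s != x -> ~~ e s x}.
  by move=> s x sS xS; move/forall_inP: (Sind s sS) => /(_ x xS) /implyP.
exists S; split=> //; have [Sm'|Sm'] := eqVneq #|S| m; [by left | right].
move=> x xA; apply/exists_inP; apply: contraT; rewrite negb_exists_in => /forall_inP xfree.
have xS : x \notin S by apply: contraT; rewrite negbK => xS; have := xfree x xS; rewrite e_refl.
suff /(maxsetsup maxS) /(_ (subsetUr _ _)) /setP /(_ x) : indep (x |: S).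
  by rewrite setU11 (negbTE xS).
apply/and3P; split.
- by rewrite subUset sub1set xA.
- apply/forall_inP => s; rewrite !inE => sxS; apply/forall_inP => y; rewrite !inE => yxS.
  case/predU1P: sxS => [->|sS]; case/predU1P: yxS => [->|yS]; rewrite ?eqxx //=.
  + by rewrite e_sym xfree ?implybT.
  + by rewrite xfree ?implybT.
  + by apply/implyP; apply: Sind.
- by rewrite cardsU1 xS add1n ltn_neqAle Sm' Sm.
Qed.

Lemma card_disjoint_cover (T : finType) (A B : {set T}) :
  [disjoint A & B] -> A :|: B = setT -> (#|A| + #|B| = #|T|)%nat.
Proof.
by move=> dAB cover; rewrite -cardsUI cover cardsT (disjoint_setI0 dAB) cards0 addn0.
Qed.

Lemma card_bigcup_le (I T : finType) (P : {pred I}) (F : I -> {set T}) :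
  (#|\bigcup_(i in P) F i| <= \sum_(i in P) #|F i|)%nat.
Proof.
elim/big_rec2: _ => [|i B b _ IH]; first by rewrite cards0.
exact: leq_trans (leq_card_setU _ _).1 (leq_add (leqnn _) IH).
Qed.

Local Open Scope R_scope.

Lemma INR_sum_le (I : finType) (P : {pred I}) (g : I -> nat) (c : R) :
  (forall i, P i -> INR (g i) <= c) -> INR (\sum_(i | P i) g i)%nat <= INR #|P| * c.
Proof.
move=> gc; rewrite -sum1_card.
elim/big_rec2: _ => [|i u v Pi IH]; first by rewrite Rmult_0_l; right.
by rewrite !plus_INR Rmult_plus_distr_r Rmult_1_l; apply: Rplus_le_compat; [apply: gc|].
Qed.

Lemma card_le_fiberwise (T1 T2 : finType) (A : {set T1}) (B : {set T2}) (f : T1 -> T2) (c : R) :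
  {in A, forall x, f x \in B} ->
  (forall y, y \in B -> INR #|[set x in A | f x == y]| <= c) ->
  INR #|A| <= INR #|B| * c.
Proof.
move=> fAB fiber_le.
suff -> : #|A| = (\sum_(y in B) #|[set x in A | f x == y]|)%nat by apply: INR_sum_le.
rewrite -sum1_card (partition_big f (mem B)) //=.
by apply: eq_bigr => y _; rewrite -sum1_card; apply: eq_bigl => x; rewrite inE.
Qed.

Lemma card_le_dominating (T : finType) (e : rel T) (A S : {set T}) (c : R) :
  {in A, forall x, exists2 s, s \in S & e s x} ->
  (forall s, s \in S -> INR #|[set x in A | e s x]| <= c) -> INR #|A| <= INR #|S| * c.
Proof.
move=> Sdom fiber_le.
pose f x := odflt x [pick s in S | e s x].
apply: (@card_le_fiberwise _ _ A S f) => [x xA|s sS].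
  rewrite /f; case: pickP => [s /andP [] //|none].
  by have [s sS esx] := Sdom x xA; move: (none s); rewrite sS esx.
apply: Rle_trans (fiber_le s sS); apply/le_INR/leP/subset_leq_card/subsetP => x.
rewrite !inE /f => /andP [xA]; case: pickP => [s' /andP [_ es'x] /= /eqP <-|none].
  by rewrite xA.
by have [s'' sS' es''x] := Sdom x xA; have := none s''; rewrite sS' es''x.
Qed.

Lemma NNE (p n : nat) : NN p n = INR (expn p n).
Proof. by rewrite /NN; elim: n => [|n IH] //=; rewrite expnS mult_INR IH. Qed.

Section CycleCounts.
Variables (p n k : nat) (X : 'I_k -> {set 'rV['F_p]_n}) (I : {set 'I_k}).

Lemma card_clash_le (J : {set 'I_k}) (M : {set tup p n k}) s (Delta D1 D2 : R) :
  [disjoint I & J] -> M \subset kcycles X -> s \in kcycles X ->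
  (forall i v, v \in X i -> INR #|[set x in kcycles X | x i == v]| <= Delta) ->
  (forall y, is_Ituple X I y -> INR (ext_count M I y) <= D1) -> 0 <= D1 ->
  INR (ext_count (kcycles X) J s) <= D2 ->
  INR #|[set x in M | clash I s x]| <= INR #|I| * Delta + D2 * D1.
Proof.
move=> dIJ MX sX deg_le ext_le D1_ge0 s_ext_le.
have [sXi _] := kcyclesP sX.
pose A1 := \bigcup_(i in I) [set x in kcycles X | x i == s i].
pose A2 := [set x in M | sum_on I x == sum_on I s].
have clash_sub : [set x in M | clash I s x] \subset A1 :|: A2.
  apply/subsetP => x; rewrite !inE /clash => /andP [xM /orP [/exists_inP [i iI xsi]|eIs]].
    by apply/orP; left; apply/bigcupP; exists i; rewrite // inE (subsetP MX).
  by rewrite xM eIs orbT.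
have A1_le : INR #|A1| <= INR #|I| * Delta.
  apply: Rle_trans (le_INR _ _ (elimT leP (card_bigcup_le _ _))) _.
  by apply: INR_sum_le => i _; apply: deg_le.
have A2_le : INR #|A2| <= D2 * D1.
  apply: Rle_trans (Rmult_le_compat_r _ _ _ D1_ge0 s_ext_le).
  apply: (@card_le_fiberwise _ _ A2 _ (splice I ^~ s)) => [x|y].
    rewrite inE => /andP [xM /eqP eIs]; apply: splice_kcycles => // i _.
    by have [] := kcyclesP (subsetP MX x xM).
  rewrite inE => /andP [yX _]; apply: Rle_trans (ext_le y _); last first.
    by apply/forall_inP => i _; have [] := kcyclesP yX.
  apply/le_INR/leP/subset_leq_card/subsetP => x.
  by rewrite !inE => /andP [/andP [xM _] /eqP <-]; rewrite xM agree_splice.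
apply: Rle_trans (le_INR _ _ (elimT leP (subset_leq_card clash_sub))) _.
apply: Rle_trans (le_INR _ _ (elimT leP (leq_card_setU A1 A2).1)) _.
rewrite plus_INR; lra.
Qed.

Lemma card_collapse_le (J : {set 'I_k}) (S : {set tup p n k}) i0 (D2 : R) :
  [disjoint I & J] -> i0 \in I -> S \subset kcycles X -> 0 <= D2 ->
  (forall s, s \in S -> INR (ext_count (kcycles X) J s) <= D2) ->
  INR #|kcycles (collapse_sets X I (neg_sums I S))| <= INR #|S| * D2.
Proof.
move=> dIJ i0I SX D2_ge0 ext_le; set W := neg_sums I S.
have W_le := le_INR _ _ (elimT leP (card_neg_sums I S)).
apply: (Rle_trans _ _ _ _ (Rmult_le_compat_r _ _ _ D2_ge0 W_le)).
apply: (@card_le_fiberwise _ _ _ W (fun z : tup p n #|I|.+1 => z ord_max)).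
  move=> z /kcyclesP [zZ _].
  by have := zZ ord_max; rewrite collapse_sets_max.
move=> w /imsetP [s sS ->]; apply: Rle_trans (ext_le s sS); apply/le_INR/leP.
rewrite -(@card_in_imset _ _ (fun z => splice I (uncollapse i0I z) s)).
  apply/subset_leq_card/subsetP => y /imsetP [z]; rewrite inE => /andP [zZ /eqP ez] ->.
  apply: splice_kcycles => //; first exact: subsetP SX s sS.
    by move=> i iI; apply: uncollapse_sets zZ iI.
  by rewrite (sum_on_uncollapse _ zZ) ez GRing.opprK.
move=> z z'; rewrite !inE => /andP [_ /eqP ez] /andP [_ /eqP ez'].
by apply: splice_uncollapse_inj; rewrite ez ez'.
Qed.

Lemma collapse_lower_bound c (S : {set tup p n k}) :
  hypH p c k -> (2 <= #|I|)%nat -> (#|I|.+1 < k)%nat -> (1 <= n)%nat ->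
  S \subset kcycles X -> {in S &, forall s x, s != x -> ~~ clash I s x} ->
  (0 < #|S| < expn p n)%nat ->
  Rpower (INR #|S| / NN p n) (Ck c #|I|.+1) * NN p n ^ #|I| <=
    INR #|kcycles (collapse_sets X I (neg_sums I S))|.
Proof.
move=> hH I_ge2 Ik n_ge1 SX Sind /andP [S_gt0 S_ltN].
have eps01 : 0 < INR #|S| / NN p n < 1.
  have S_gt0R : 0 < INR #|S| by apply: (lt_INR 0); apply/ltP.
  have S_ltNR : INR #|S| < INR (expn p n) by apply/lt_INR/ltP.
  rewrite NNE; split; first by apply: Rdiv_lt_0_compat; lra.
  apply: (Rmult_lt_reg_r (INR (expn p n))); first lra.
  by rewrite /Rdiv Rmult_assoc Rinv_l; lra.
have collapse_inj : {in S &, injective (collapse I)}.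
  move=> s x sS xS e; apply/eqP; apply: contraT => ne.
  by have := collapse_disjoint (Sind s x sS xS ne); rewrite /disjoint_tup e => /(_ ord_max).
apply/Rge_le; rewrite -[X in NN p n ^ X](subn1 #|I|.+1).
apply: (hH _ _ Ik _ eps01 _ n_ge1); first by rewrite ltnS.
exists [set collapse I s | s in S]; split; [|split].
- apply/subsetP => _ /imsetP [s sS ->].
  by apply: collapse_kcycles; [exact: subsetP SX s sS | exact: imset_f].
- move=> _ _ /imsetP [s sS ->] /imsetP [x xS ->] ne.
  by apply: collapse_disjoint; apply: Sind => //; apply/eqP => esx; apply: ne; rewrite esx.
- rewrite card_in_imset //; apply: Req_ge; rewrite /Rdiv Rmult_assoc Rinv_l ?Rmult_1_r //.
  by rewrite NNE; apply: not_0_INR; lia.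
Qed.

Lemma collapse_density_le c (J : {set 'I_k}) (S : {set tup p n k}) i0 (D : R) :
  hypH p c k -> [disjoint I & J] -> i0 \in I -> (2 <= #|I|)%nat -> (#|I|.+1 < k)%nat ->
  (1 <= n)%nat -> S \subset kcycles X -> {in S &, forall s x, s != x -> ~~ clash I s x} ->
  (0 < #|S| < expn p n)%nat -> 0 <= D ->
  (forall s, s \in S -> INR (ext_count (kcycles X) J s) <= D * NN p n ^ (#|I| - 1)) ->
  Rpower (INR #|S| / NN p n) (Ck c #|I|.+1) <= INR #|S| / NN p n * D.
Proof.
move=> hH dIJ i0I I_ge2 Ik n_ge1 SX Sind S_bounds D_ge0 ext_le.
have NN_gt0 : 0 < NN p n by rewrite NNE; apply: (lt_INR 0); apply/ltP; lia.
have low := collapse_lower_bound hH I_ge2 Ik n_ge1 SX Sind S_bounds.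
have D_NN_ge0 : 0 <= D * NN p n ^ (#|I| - 1) by apply: Rmult_le_pos => //; apply: pow_le; lra.
have up := card_collapse_le dIJ i0I SX D_NN_ge0 ext_le.
apply: (Rmult_le_reg_r (NN p n ^ #|I|)); first exact: pow_lt.
apply: (Rle_trans _ _ _ (Rle_trans _ _ _ low up)); right.
have I_pred : #|I| = (#|I| - 1).+1 by lia.
by rewrite [X in _ = _ * NN p n ^ X]I_pred /=; field; lra.
Qed.

End CycleCounts.

Lemma ln_le_ln (x y : R) : 0 < x -> 0 < y -> ln x <= ln y <-> x <= y.
Proof.
move=> x_gt0 y_gt0; split=> le_xy; apply: Rnot_lt_le => lt_yx.
  by have := ln_increasing _ _ y_gt0 lt_yx; lra.
by have := ln_lt_inv _ _ y_gt0 x_gt0 lt_yx; lra.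
Qed.

Lemma ln_ge0 (x : R) : 1 <= x -> 0 <= ln x.
Proof. by move=> x_ge1; rewrite -ln_1; apply/ln_le_ln; lra. Qed.

(* Raising the second inequality to the power K/A bounds e^(Kg) by 2^(K/A) th d; since
   K/A <= Kg, the factor 2^(K/A) is absorbed by the (1/2)^(Kg) coming from r <= 2k th e. *)
Lemma density_bound (A K g e r th d k : R) :
  1 <= A -> 0 < K -> 1 <= g -> 0 < e -> 0 < r < 1 -> 1 <= th -> 0 < d -> 1 <= k ->
  r <= 2 * k * th * e ->
  Rpower e (A * g + 1) <= e * (2 * Rpower (th * d) (/ K * A)) ->
  d * Rpower th (K * g + 1) >= Rpower (r / (4 * k)) (K * g + 1).
Proof.
move=> A_ge1 K_gt0 g_ge1 e_gt0 [r_gt0 r_lt1] th_ge1 d_gt0 k_ge1 r_le e_pow.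
have ln2_gt0 : 0 < ln 2 by rewrite -ln_1; apply: ln_increasing; lra.
have lnk_ge0 := ln_ge0 k_ge1.
have lnth_ge0 := ln_ge0 th_ge1.
have lnr_lt0 : ln r < 0 by rewrite -ln_1; apply: ln_increasing.
have ln4k : ln (4 * k) = 2 * ln 2 + ln k.
  by rewrite (_ : 4 = 2 * 2); [rewrite !ln_mult|]; lra.
have ln_e : A * g * ln e <= ln 2 + / K * A * (ln th + ln d).
  have P_gt0 : 0 < Rpower (th * d) (/ K * A) := exp_pos _.
  have lnP : ln (Rpower (th * d) (/ K * A)) = / K * A * (ln th + ln d).
    by rewrite ln_Rpower ln_mult; lra.
  have rhs_gt0 : 0 < e * (2 * Rpower (th * d) (/ K * A)) by apply: Rmult_lt_0_compat; lra.
  move/(ln_le_ln (exp_pos _) rhs_gt0): e_pow.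
  by rewrite ln_Rpower !ln_mult ?lnP; lra.
have ln_r : ln r <= ln 2 + ln k + ln th + ln e.
  have rhs_gt0 : 0 < 2 * k * th * e by repeat apply: Rmult_lt_0_compat; lra.
  move/(ln_le_ln r_gt0 rhs_gt0): r_le.
  by rewrite !ln_mult; try lra; repeat apply: Rmult_lt_0_compat; lra.
have ln_e' : K * g * ln e <= K / A * ln 2 + ln th + ln d.
  have KA_gt0 : 0 < K / A by apply: Rdiv_lt_0_compat; lra.
  have := Rmult_le_compat_l _ _ _ (Rlt_le _ _ KA_gt0) ln_e.
  have -> : K / A * (A * g * ln e) = K * g * ln e by field; lra.
  by have -> : K / A * (ln 2 + / K * A * (ln th + ln d)) = K / A * ln 2 + ln th + ln d
    by field; lra.
have KA_le : K / A * ln 2 <= K * g * ln 2.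
  apply: Rmult_le_compat_r; first lra.
  apply: (Rmult_le_reg_r A); first lra.
  have -> : K / A * A = K by field; lra.
  have gA_ge1 : 1 <= g * A by nra.
  nra.
have Kg_ln_r : K * g * (ln r - ln (4 * k)) <= K * g * (ln th + ln e - ln 2).
  by apply: Rmult_le_compat_l; nra.
have gap : ln r - ln (4 * k) < 0 by lra.
apply/Rle_ge/ln_le_ln; first exact: exp_pos.
  by apply: Rmult_lt_0_compat => //; apply: exp_pos.
rewrite ln_mult //; last exact: exp_pos.
rewrite !ln_Rpower /Rdiv ln_mult ?ln_Rinv; [nra | lra | lra | ].
by apply: Rinv_0_lt_compat; lra.
Qed.

(* With k' = 3, n = 1 and Z_i = {0}, the single cycle (0, 0, 0) is a disjoint family of
   density 1/p, so H(k) forces 1 >= p^(-C_{p,3}) p^2. *)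
Lemma C3_ge2 p c k : prime p -> (3 < k)%nat -> hypH p c k -> 2 <= C3 c.
Proof.
move=> p_pr k_gt3 hH.
have p_gt1 : 1 < INR p by apply: (lt_INR 1); apply/ltP; exact: prime_gt1.
have inv_p : 0 < / INR p < 1.
  split; first by apply: Rinv_0_lt_compat; lra.
  by rewrite -Rinv_1; apply: Rinv_1_lt_contravar; lra.
pose Z (_ : 'I_3) := [set (GRing.zero : 'rV['F_p]_1)].
have one_cycle : kcycles Z = [set [ffun=> GRing.zero]] := kcycles_zero p 1 3.
have /Rge_le : INR #|kcycles Z| >= Rpower (/ INR p) (Ck c 3) * NN p 1 ^ (3 - 1).
  apply: (hH 3%nat isT k_gt3 _ inv_p 1%nat isT); exists (kcycles Z).
  split; [exact: subxx | split].
  - by move=> x y; rewrite one_cycle !inE => /eqP -> /eqP ->.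
  - by rewrite one_cycle cards1 /NN /= Rmult_1_r Rinv_l; lra.
rewrite one_cycle cards1 /Ck /NN /= !Rmult_1_r Rmult_1_l (_ : C3 c - 1 + 1 = C3 c); last ring.
have lnp_gt0 : 0 < ln (INR p) by rewrite -ln_1; apply: ln_increasing; lra.
have pp_gt0 : 0 < INR p * INR p by nra.
rewrite -ln_le_ln; [|by apply: Rmult_lt_0_compat => //; apply: exp_pos | lra].
rewrite ln_1 ln_mult ?ln_Rpower ?ln_Rinv ?ln_mult; try lra; last exact: exp_pos.
nra.
Qed.

Lemma alpha_pow (theta delta' : R) (k m : nat) : 0 < theta * delta' ->
  alpha theta delta' k ^ m = Rpower (theta * delta') (/ INR (k - 2) * INR m).
Proof. by move=> td_gt0; rewrite -Rpower_pow ?Rpower_mult //; apply: exp_pos. Qed.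

Lemma alpha_pow_complements (theta delta' : R) (k a b : nat) :
  0 < theta * delta' -> (2 <= a)%nat -> (2 <= b)%nat -> (a + b = k)%nat ->
  alpha theta delta' k ^ (k - a - 1) * alpha theta delta' k ^ (k - b - 1) = theta * delta'.
Proof.
move=> td_gt0 a_ge2 b_ge2 ab_k.
rewrite -pow_add plusE (_ : (k - a - 1 + (k - b - 1) = k - 2)%nat); last by lia.
rewrite alpha_pow // Rinv_l ?Rpower_1 //; apply: not_0_INR; lia.
Qed.

Lemma not_bad_ext_le p n k (X : 'I_k -> {set 'rV['F_p]_n}) (theta delta' : R)
    (I1 I2 : {set 'I_k}) (s : tup p n k) :
  (#|I1| + #|I2| = k)%nat -> ~ bad X theta delta' I2 s ->
  INR (ext_count (kcycles X) I2 s) <=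
    2 * alpha theta delta' k ^ (#|I1| - 1) * NN p n ^ (#|I1| - 1).
Proof.
move=> card12 /Rnot_ge_lt; rewrite (_ : (#|I1| - 1 = k - #|I2| - 1)%nat); [lra | lia].
Qed.

Lemma card_clash_density p n k (X : 'I_k -> {set 'rV['F_p]_n}) (theta delta' : R)
    (M : {set tup p n k}) (I1 I2 : {set 'I_k}) s :
  0 < theta * delta' -> [disjoint I1 & I2] -> (#|I1| + #|I2| = k)%nat ->
  (2 <= #|I1|)%nat -> (2 <= #|I2|)%nat ->
  M \subset kcycles X -> s \in M ->
  (forall i v, v \in X i ->
     INR #|[set x in kcycles X | x i == v]| <= theta * delta' * NN p n ^ (k - 2)) ->
  (forall y, is_Ituple X I1 y -> INR (ext_count M I1 y) <=
     2 * alpha theta delta' k ^ (k - #|I1| - 1) * NN p n ^ (k - #|I1| - 1)) ->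
  ~ bad X theta delta' I2 s ->
  INR #|[set x in M | clash I1 s x]| <= 2 * INR k * theta * (delta' * NN p n ^ (k - 2)).
Proof.
move=> td_gt0 dI12 card12 I1_ge2 I2_ge2 MX sM deg_le ext1_le s_good.
have NN_ge0 : 0 <= NN p n by apply: pow_le; apply: pos_INR.
have alpha_gt0 : 0 < alpha theta delta' k by apply: exp_pos.
have D1_ge0 : 0 <= 2 * alpha theta delta' k ^ (k - #|I1| - 1) * NN p n ^ (k - #|I1| - 1).
  by apply: Rmult_le_pos; [apply: Rmult_le_pos; [lra | apply: pow_le; lra] | apply: pow_le].
have s_ext : INR (ext_count (kcycles X) I2 s) <=
    2 * alpha theta delta' k ^ (k - #|I2| - 1) * NN p n ^ (k - #|I2| - 1).
  exact/Rlt_le/Rnot_ge_lt.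
apply: (Rle_trans _ _ _ (card_clash_le dI12 MX (subsetP MX s sM) deg_le ext1_le D1_ge0 s_ext)).
have NN_pow : NN p n ^ (k - #|I2| - 1) * NN p n ^ (k - #|I1| - 1) = NN p n ^ (k - 2).
  by rewrite -pow_add plusE; congr (_ ^ _); lia.
have alpha_prod := alpha_pow_complements td_gt0 I2_ge2 I1_ge2 (etrans (addnC _ _) card12).
have I1_le : INR #|I1| + 4 <= 2 * INR k.
  have I1_2 : INR (#|I1| + 2) <= INR k by apply/le_INR/leP; lia.
  have k_2 : INR 2 <= INR k by apply/le_INR/leP; lia.
  rewrite -plusE plus_INR in I1_2.
  have INR2 : INR 2 = 2 by rewrite /=; lra.
  lra.
have tdE_ge0 : 0 <= theta * delta' * NN p n ^ (k - 2) by apply: Rmult_le_pos; [lra | apply: pow_le].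
rewrite (_ : 2 * _ * _ * (2 * _ * _) = 4 * (alpha theta delta' k ^ (k - #|I2| - 1) *
  alpha theta delta' k ^ (k - #|I1| - 1)) * (NN p n ^ (k - #|I2| - 1) * NN p n ^ (k - #|I1| - 1))).
  by rewrite alpha_prod NN_pow; nra.
ring.
Qed.

Lemma ratio_lower_bound (r t s N m d E : R) :
  0 < r < 1 -> 2 <= t -> 2 <= N -> 0 < d -> 0 < E -> r * d * (N * E) <= m ->
  s = N - 1 \/ m <= s * (t * (d * E)) -> r <= t * (s / N).
Proof.
move=> [r_gt0 r_lt1] t_ge2 N_ge2 d_gt0 E_gt0 m_ge S_cases.
apply: (Rmult_le_reg_r N); first lra.
rewrite (_ : t * (s / N) * N = t * s); last by field; lra.
case: S_cases => [->|m_le]; first nra.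
apply: (Rmult_le_reg_r (d * E)); first exact: Rmult_lt_0_compat.
nra.
Qed.

Theorem lemma6 (p : nat) (c : R) (k n : nat)
  (X : 'I_k -> {set 'rV['F_p]_n}) (delta' theta r : R)
  (M : {set tup p n k}) (I1 I2 : {set 'I_k}) :
  prime p -> is_cp3 p c -> (4 <= k)%nat -> hypH p c k -> (1 <= n)%nat ->
  (* standing setting *)
  0 < delta' ->
  INR #|kcycles X| = delta' * NN p n ^ (k - 1) ->
  1 <= theta ->
  (forall (i : 'I_k) (v : 'rV['F_p]_n), v \in X i ->
     INR #|[set x in kcycles X | x i == v]| <= theta * delta' * NN p n ^ (k - 2)) ->
  (* the collection M *)
  M \subset kcycles X ->
  0 < r < 1 ->
  INR #|M| >= r * delta' * NN p n ^ (k - 1) ->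
  (* the partition I1, I2 *)
  [disjoint I1 & I2] -> I1 :|: I2 = setT ->
  (2 <= #|I1| <= k - 2)%nat -> (2 <= #|I2| <= k - 2)%nat ->
  (* (i) *)
  (forall y : tup p n k, is_Ituple X I1 y ->
     INR (ext_count M I1 y) <=
       2 * alpha theta delta' k ^ (k - #|I1| - 1) * NN p n ^ (k - #|I1| - 1)) ->
  (* (ii) *)
  (forall x : tup p n k, x \in M -> ~ bad X theta delta' I2 x) ->
  delta' * Rpower theta (Ck c k) >= Rpower (r / (4 * INR k)) (Ck c k).
Proof.
move=> p_pr _ k_ge4 hH n_ge1 d_gt0 _ th_ge1 deg_le MX r01 cardM dI12 cover12
  /andP [I1_ge2 I1_le] /andP [I2_ge2 _] ext1_le not_bad.
have card12 : (#|I1| + #|I2| = k)%nat by rewrite card_disjoint_cover // card_ord.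
have td_gt0 : 0 < theta * delta' by nra.
have N_ge2 : (2 <= expn p n)%nat by have := ltn_expl n (prime_gt1 p_pr); lia.
have NN_ge2 : 2 <= NN p n by rewrite NNE; apply: (le_INR 2); apply/leP.
have k_ge4R : 4 <= INR k by have /= := le_INR 4 k (elimT leP k_ge4); lra.
have [i0 i0I1] : exists i0, i0 \in I1 by apply/card_gt0P; lia.
have [S [SM Sind S_le S_cases]] :=
  ex_maximal_independent M (expn p n).-1 (@clash_refl p n k I1) (@clash_sym p n k I1).
have SX := subset_trans SM MX.
have r_le : r <= 2 * INR k * theta * (INR #|S| / NN p n).
  rewrite (_ : NN p n ^ (k - 1) = NN p n * NN p n ^ (k - 2)) in cardM; last first.
    by rewrite (_ : (k - 1 = (k - 2).+1)%nat) //; lia.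
  apply: (ratio_lower_bound r01 _ NN_ge2 d_gt0 _ (Rge_le _ _ cardM)); [nra | apply: pow_lt; lra |].
  case: S_cases => [S_N | S_dom]; [left | right].
    by rewrite S_N NNE -{2}(prednK (ltnW N_ge2)) S_INR; ring.
  apply: card_le_dominating S_dom _ => s sS.
  exact: card_clash_density td_gt0 dI12 card12 I1_ge2 I2_ge2 MX (subsetP SM s sS) deg_le
    ext1_le (not_bad s (subsetP SM s sS)).
have S_bounds : (0 < #|S| < expn p n)%nat.
  apply/andP; split; last by move: S_le; lia.
  rewrite lt0n; apply/eqP => S0; move: r_le; rewrite S0 /= /Rdiv !Rmult_0_l Rmult_0_r; lra.
have D_ge0 : 0 <= 2 * alpha theta delta' k ^ (#|I1| - 1).
  by apply: Rmult_le_pos; [lra | apply: pow_le; apply: Rlt_le; apply: exp_pos].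
have I1k : (#|I1|.+1 < k)%nat by lia.
have e_pow := collapse_density_le hH dI12 i0I1 I1_ge2 I1k n_ge1 SX Sind S_bounds D_ge0
  (fun s sS => not_bad_ext_le card12 (not_bad s (subsetP SM s sS))).
have Ck_I1 : Ck c #|I1|.+1 = INR (#|I1| - 1) * (C3 c - 1) + 1.
  by rewrite /Ck (_ : (#|I1|.+1 - 2 = #|I1| - 1)%nat) //; lia.
rewrite Ck_I1 alpha_pow // in e_pow.
apply: (density_bound _ _ _ _ r01 th_ge1 d_gt0 _ r_le e_pow).
- by apply: (le_INR 1); apply/leP; lia.
- by apply: (lt_INR 0); apply/ltP; lia.
- by have := C3_ge2 p_pr k_ge4 hH; lra.
- by apply: Rdiv_lt_0_compat; [apply: (lt_INR 0); apply/ltP; case/andP: S_bounds | lra].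
- lra.
Qed.
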